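(* Let $V$ be a $b$-complete semimodule over a $b$-complete idempotent semiring $K$. The following are equivalent: (1) $V$ has the $b$-approximation property, i.e. the identity operator $\mathrm{id}\colon V\to V$ is $b$-nuclear; (2) every $b$-linear mapping from $V$ to an arbitrary $b$-complete semimodule $W$ over $K$ is $b$-nuclear; (3) every $b$-linear mapping from an arbitrary $b$-complete semimodule $W$ over $K$ to $V$ is $b$-nuclear. In particular, $V$ is $b$-nuclear (i.e., condition (2) holds) if and only if $V$ has the $b$-approximation property.
   Context: Idempotent semigroup: commutative, associative, idempotent $\oplus$ with order $x\preceq y$ iff $x\oplus y=y$; $b$-complete: every bounded above subset (incl. $\emptyset$) has a least upper bound. A homomorphism of $b$-complete semigroups is a $b$-homomorphism if it preserves least upper bounds of bounded above subsets. Idempotent semiring: idempotent commutative associative $\oplus$, associative $\odot$ bi-distributive, unit $\mathbf 1$, zero $\mathbf 0$; $b$-complete if $b$-complete and $k\odot(\oplus X)=\oplus(k\odot X)$, $(\oplus X)\odot k=\oplus(X\odot k)$ for bounded $X$. Idempotent semimodule over $K$: idempotent semigroup with associative bi-distributive $K$-action, $\mathbf 1\odot x=x$, $\mathbf 0\odot x=\mathbf 0$; $b$-complete if $b$-complete as semigroup and $(\oplus Q)\odot x=\oplus(Q\odot x)$, $k\odot(\oplus X)=\oplus(k\odot X)$ for bounded $Q,X$. Linear: preserves $\oplus$ and scalar multiplication; $b$-linear: moreover a $b$-homomorphism; a $b$-linear functional is a $b$-linear map into $K$. A one-dimensional mapping $V\to W$ is one of the form $v\mapsto\phi(v)\odot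 w$ with $\phi$ a $b$-linear functional on $V$ and $w\in W$; a mapping is $b$-nuclear if it is the pointwise supremum of a set of one-dimensional mappings that is bounded above (pointwise). $V$ is $b$-nuclear if every $b$-linear mapping from $V$ to any $b$-complete semimodule over $K$ is $b$-nuclear. *)

Set Implicit Arguments.

Definition ileq {T : Type} (add : T -> T -> T) (x y : T) : Prop := add x y = y.

Definition upper_bound {T : Type} (add : T -> T -> T) (X : T -> Prop) (b : T) : Prop :=
  forall x, X x -> ileq add x b.

Definition bounded_above {T : Type} (add : T -> T -> T) (X : T -> Prop) : Prop :=
  exists b, upper_bound add X b.

Definition is_lub {T : Type} (add : T -> T -> T) (X : T -> Prop) (s : T) : Prop :=
  upper_bound add X s /\ forall b, upper_bound add X b -> ileq add s b.

Definition img {A B : Type} (f : A -> B) (X : A -> Prop) : B -> Prop :=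
  fun y => exists x, X x /\ y = f x.

Record bsemiring := BSemiring {
  kcar :> Type;
  kadd : kcar -> kcar -> kcar;
  kmul : kcar -> kcar -> kcar;
  kone : kcar;
  kzero : kcar;
  kadd_assoc : forall x y z, kadd x (kadd y z) = kadd (kadd x y) z;
  kadd_comm : forall x y, kadd x y = kadd y x;
  kadd_idem : forall x, kadd x x = x;
  kadd0 : forall x, kadd kzero x = x;
  kmul_assoc : forall x y z, kmul x (kmul y z) = kmul (kmul x y) z;
  kmul1l : forall x, kmul kone x = x;
  kmul1r : forall x, kmul x kone = x;
  kmul0l : forall x, kmul kzero x = kzero;
  kmul0r : forall x, kmul x kzero = kzero;
  kmulDl : forall x y z, kmul (kadd x y) z = kadd (kmul x z) (kmul y z);
  kmulDr : forall x y z, kmul z (kadd x y) = kadd (kmul z x) (kmul z y);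
  kbcomplete : forall X, bounded_above kadd X -> exists s, is_lub kadd X s;
  kmul_lub_l : forall k X s, is_lub kadd X s -> is_lub kadd (img (kmul k) X) (kmul k s);
  kmul_lub_r : forall k X s, is_lub kadd X s ->
    is_lub kadd (img (fun x => kmul x k) X) (kmul s k)
}.

Record bsemimodule (K : bsemiring) := BSemimodule {
  vcar :> Type;
  vadd : vcar -> vcar -> vcar;
  vscale : K -> vcar -> vcar;
  vzero : vcar;
  vadd_assoc : forall x y z, vadd x (vadd y z) = vadd (vadd x y) z;
  vadd_comm : forall x y, vadd x y = vadd y x;
  vadd_idem : forall x, vadd x x = x;
  vadd0 : forall x, vadd vzero x = x;
  vscale_assoc : forall (k l : K) x, vscale (@kmul K k l) x = vscale k (vscale l x);
  vscaleDl : forall (k l : K) x, vscale (@kadd K k l) x = vadd (vscale k x) (vscale l x);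
  vscaleDr : forall (k : K) x y, vscale k (vadd x y) = vadd (vscale k x) (vscale k y);
  vscale1 : forall x, vscale (@kone K) x = x;
  vscale0 : forall x, vscale (@kzero K) x = vzero;
  vbcomplete : forall X, bounded_above vadd X -> exists s, is_lub vadd X s;
  vscale_lub_l : forall (Q : K -> Prop) (q : K) x, is_lub (@kadd K) Q q ->
    is_lub vadd (img (fun k => vscale k x) Q) (vscale q x);
  vscale_lub_r : forall (k : K) X s, is_lub vadd X s ->
    is_lub vadd (img (vscale k) X) (vscale k s)
}.

Arguments vadd {K} _ _ _.
Arguments vscale {K} _ _ _.

Definition b_linear {K : bsemiring} (V W : bsemimodule K) (f : V -> W) : Prop :=
  (forall x y, f (vadd V x y) = vadd W (f x) (f y)) /\
  (forall (k : K) x, f (vscale V k x) = vscale W k (f x)) /\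
  (forall X s, bounded_above (vadd V) X -> is_lub (vadd V) X s ->
     is_lub (vadd W) (img f X) (f s)).

Definition b_linear_functional {K : bsemiring} (V : bsemimodule K) (phi : V -> K) : Prop :=
  (forall x y, phi (vadd V x y) = @kadd K (phi x) (phi y)) /\
  (forall (k : K) x, phi (vscale V k x) = @kmul K k (phi x)) /\
  (forall X s, bounded_above (vadd V) X -> is_lub (vadd V) X s ->
     is_lub (@kadd K) (img phi X) (phi s)).

Definition one_dimensional {K : bsemiring} (V W : bsemimodule K) (g : V -> W) : Prop :=
  exists (phi : V -> K) (w : W), b_linear_functional V phi /\ forall v, g v = vscale W (phi v) w.

Definition b_nuclear_map {K : bsemiring} (V W : bsemimodule K) (f : V -> W) : Prop :=
  exists S : (V -> W) -> Prop,
    (forall g, S g -> one_dimensional V W g) /\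
    (exists h : V -> W, forall g v, S g -> ileq (vadd W) (g v) (h v)) /\
    (forall v, is_lub (vadd W) (fun y => exists g, S g /\ y = g v) (f v)).

Definition b_approximation {K : bsemiring} (V : bsemimodule K) : Prop :=
  b_nuclear_map V V (fun v => v).

Definition b_nuclear_semimodule {K : bsemiring} (V : bsemimodule K) : Prop :=
  forall (W : bsemimodule K) (f : V -> W), b_linear V W f -> b_nuclear_map V W f.


Set Implicit Arguments.

(* b-nuclear maps form a two-sided ideal: composing a b-nuclear map with a b-linear map on either
   side composes each one-dimensional summand, and b-linear maps preserve the pointwise suprema.
   Hence if the identity of V is b-nuclear, so is every b-linear map into or out of V; conversely
   the identity is itself b-linear. *)

Lemma is_lub_ext {T : Type} (add : T -> T -> T) (X Y : T -> Prop) (s : T) :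
  (forall x, X x <-> Y x) -> is_lub add X s -> is_lub add Y s.
Proof.
  intros HXY [Hub Hleast]; split.
  - intros x Hx; apply Hub, HXY, Hx.
  - intros b Hb; apply Hleast; intros x Hx; apply Hb, HXY, Hx.
Qed.

Lemma img_img {A B C : Type} (k : A -> B) (h : B -> C) (X : A -> Prop) (z : C) :
  img h (img k X) z <-> img (fun x => h (k x)) X z.
Proof.
  split.
  - intros [y [[x [Hx ->]] ->]]; exists x; auto.
  - intros [x [Hx ->]]; exists (k x); split; [exists x|]; auto.
Qed.

Section Composition.

Variable K : bsemiring.

Lemma b_linear_id (V : bsemimodule K) : b_linear V V (fun v => v).
Proof.
  split; [|split]; try reflexivity.
  intros X s _ Hs; eapply is_lub_ext; [|exact Hs].
  intros x; split; [intros Hx; exists x; auto | intros [y [Hy ->]]; exact Hy].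
Qed.

Lemma b_linear_monotone (V W : bsemimodule K) (f : V -> W) (x y : V) :
  b_linear V W f -> ileq (vadd V) x y -> ileq (vadd W) (f x) (f y).
Proof.
  intros [Hadd _] Hxy; unfold ileq in *; rewrite <- Hadd, Hxy; reflexivity.
Qed.

Lemma b_linear_functional_comp (U V : bsemimodule K) (f : U -> V) (phi : V -> K) :
  b_linear U V f -> b_linear_functional V phi -> b_linear_functional U (fun u => phi (f u)).
Proof.
  intros [fadd [fscale flub]] [padd [pscale plub]]; split; [|split].
  - intros x y; rewrite fadd; apply padd.
  - intros k x; rewrite fscale; apply pscale.
  - intros X s Hbnd Hs.
    assert (Hfs := flub X s Hbnd Hs).
    assert (Hfbnd : bounded_above (vadd V) (img f X)) by (exists (f s); apply Hfs).
    eapply is_lub_ext; [|exact (plub _ _ Hfbnd Hfs)].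
    intros y; apply img_img.
Qed.

Lemma one_dimensional_comp_r (U V W : bsemimodule K) (f : U -> V) (g : V -> W) :
  b_linear U V f -> one_dimensional V W g -> one_dimensional U W (fun u => g (f u)).
Proof.
  intros Hf [phi [w [Hphi Hg]]].
  exists (fun u => phi (f u)), w; split.
  - exact (b_linear_functional_comp Hf Hphi).
  - intros u; apply Hg.
Qed.

Lemma one_dimensional_comp_l (V W X : bsemimodule K) (g : V -> W) (f : W -> X) :
  b_linear W X f -> one_dimensional V W g -> one_dimensional V X (fun v => f (g v)).
Proof.
  intros [_ [fscale _]] [phi [w [Hphi Hg]]].
  exists phi, (f w); split; [exact Hphi|].
  intros v; rewrite Hg; apply fscale.
Qed.

Lemma b_nuclear_map_comp_r (U V W : bsemimodule K) (f : U -> V) (g : V -> W) :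
  b_linear U V f -> b_nuclear_map V W g -> b_nuclear_map U W (fun u => g (f u)).
Proof.
  intros Hf [S [HS [[h Hh] Hlub]]].
  exists (img (fun g' u => g' (f u)) S); split; [|split].
  - intros _ [g' [Hg' ->]]; exact (one_dimensional_comp_r Hf (HS g' Hg')).
  - exists (fun u => h (f u)); intros _ u [g' [Hg' ->]]; exact (Hh g' (f u) Hg').
  - intros u; eapply is_lub_ext; [|exact (Hlub (f u))].
    intros y; apply iff_sym, img_img.
Qed.

Lemma b_nuclear_map_comp_l (V W X : bsemimodule K) (g : V -> W) (f : W -> X) :
  b_linear W X f -> b_nuclear_map V W g -> b_nuclear_map V X (fun v => f (g v)).
Proof.
  intros Hf [S [HS [[h Hh] Hlub]]].
  exists (img (fun g' v => f (g' v)) S); split; [|split].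
  - intros _ [g' [Hg' ->]]; exact (one_dimensional_comp_l Hf (HS g' Hg')).
  - exists (fun v => f (h v)); intros _ v [g' [Hg' ->]].
    exact (b_linear_monotone Hf (Hh g' v Hg')).
  - intros v.
    assert (Hbnd : bounded_above (vadd W) (img (fun g' => g' v) S))
      by (exists (g v); apply Hlub).
    eapply is_lub_ext; [|exact (proj2 (proj2 Hf) _ _ Hbnd (Hlub v))].
    intros y; apply (iff_trans (img_img (fun g' => g' v) f S y)).
    exact (iff_sym (img_img (fun g' v' => f (g' v')) (fun g' => g' v) S y)).
Qed.

End Composition.

Theorem proposition7p26 (K : bsemiring) (V : bsemimodule K) :
  (b_approximation V <->
     (forall (W : bsemimodule K) (f : V -> W), b_linear V W f -> b_nuclear_map V W f)) /\
  (b_approximation V <->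
     (forall (W : bsemimodule K) (f : W -> V), b_linear W V f -> b_nuclear_map W V f)) /\
  (b_nuclear_semimodule V <-> b_approximation V).
Proof.
  assert (Hout : b_approximation V -> b_nuclear_semimodule V).
  { intros Hid W f Hf; exact (b_nuclear_map_comp_l Hf Hid). }
  split; [|split]; split.
  - exact Hout.
  - intros H; exact (H V _ (b_linear_id V)).
  - intros Hid W f Hf; exact (b_nuclear_map_comp_r Hf Hid).
  - intros H; exact (H V _ (b_linear_id V)).
  - intros H; exact (H V _ (b_linear_id V)).
  - exact Hout.
Qed.
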